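(* Let $\{(\mathbf{x}_i,\mathbf{v}_i)\}_{i=1}^N$ be a global smooth solution of the Cucker–Smale model with bonding force $$\dot{\mathbf{x}}_i=\mathbf{v}_i,\qquad \dot{\mathbf{v}}_i=\frac{\kappa_0}{N}\sum_{j=1}^N\psi(\|\mathbf{x}_j-\mathbf{x}_i\|)(\mathbf{v}_j-\mathbf{v}_i)+\frac{\kappa_1}{N}\sum_{j\ne i}\Big\langle\mathbf{v}_j-\mathbf{v}_i,\frac{\mathbf{x}_j-\mathbf{x}_i}{\|\mathbf{x}_j-\mathbf{x}_i\|}\Big\rangle\frac{\mathbf{x}_j-\mathbf{x}_i}{\|\mathbf{x}_j-\mathbf{x}_i\|}+\frac{\kappa_2}{N}\sum_{j\ne i}\big(\|\mathbf{x}_j-\mathbf{x}_i\|-d^\infty_{ij}\big)\frac{\mathbf{x}_j-\mathbf{x}_i}{\|\mathbf{x}_j-\mathbf{x}_i\|}.$$ Then for all $i,j\in[N]$, $$\sup_{t\ge0}\Big|\frac{d}{dt}\|\mathbf{v}_i(t)-\mathbf{v}_j(t)\|^2\Big|<\infty.$$ In particular, $t\mapsto\|\mathbf{v}_i(t)-\mathbf{v}_j(t)\|^2$ is uniformly continuous on $[0,\infty)$.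
   Context: $N\ge2$, $d\ge1$, Euclidean norm and inner product on $\mathbb{R}^d$; $\kappa_0,\kappa_1,\kappa_2\ge0$; $[d^\infty_{ij}]$ real symmetric with zero diagonal. $E:=\frac12\sum_i\|\mathbf{v}_i\|^2+\frac{\kappa_2}{4N}\sum_{i,j}(\|\mathbf{x}_j-\mathbf{x}_i\|-d^\infty_{ij})^2$, $U:=\max_{i\ne j}d^\infty_{ij}+\sqrt{2NE(0)/\kappa_2}$. The weight $\psi:[0,\infty)\to[0,\infty)$ is locally Lipschitz with $0\le\psi(r)\le\psi_M$ for all $r\ge0$ and $\min_{r\in[0,U]}\psi(r)>0$. A global smooth solution is a $C^1$ solution on $[0,\infty)$ with $\mathbf{x}_i(t)\ne\mathbf{x}_j(t)$ for $i\ne j$. *)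

From HB Require Import structures.
From mathcomp Require Import all_boot all_order all_algebra.
From mathcomp Require Import all_classical all_reals all_analysis.
Set Implicit Arguments. Unset Strict Implicit. Unset Printing Implicit Defensive.
Import Order.TTheory GRing.Theory Num.Theory.
Import numFieldNormedType.Exports.
Local Open Scope classical_set_scope.
Local Open Scope ring_scope.

Section CSDefs.
Variables (R : realType) (N d : nat).

Definition vdot (u w : 'I_d -> R) : R := \sum_(k < d) u k * w k.
Definition enorm (u : 'I_d -> R) : R := Num.sqrt (vdot u u).
Definition vdiff (u w : 'I_d -> R) : 'I_d -> R := fun k => u k - w k.

(* derivative of f at t relative to the domain [0, +oo)
   (one-sided at t = 0, two-sided for t > 0) *)
Definition has_deriv_nonneg (f : R -> R) (t l : R) : Prop :=
  (fun h => h^-1 * (f (t + h) - f t)) @ within (fun h => 0 <= t + h) (0 : R)^'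
    --> l.

Definition cs_accel (kappa0 kappa1 kappa2 : R) (psi : R -> R)
  (dinf : 'I_N -> 'I_N -> R)
  (x v : 'I_N -> 'I_d -> R) (i : 'I_N) (k : 'I_d) : R :=
  let e j := fun l => vdiff (x j) (x i) l / enorm (vdiff (x j) (x i)) in
  kappa0 / N%:R * \sum_(j < N) psi (enorm (vdiff (x j) (x i))) * (v j k - v i k)
  + kappa1 / N%:R * \sum_(j < N | j != i)
        vdot (vdiff (v j) (v i)) (e j) * e j k
  + kappa2 / N%:R * \sum_(j < N | j != i)
        (enorm (vdiff (x j) (x i)) - dinf i j) * e j k.

Definition cs_global_solution (kappa0 kappa1 kappa2 : R) (psi : R -> R)
  (dinf : 'I_N -> 'I_N -> R)
  (x v : 'I_N -> R -> 'I_d -> R) : Prop :=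
  (forall t, 0 <= t -> forall i k,
      has_deriv_nonneg (fun s => x i s k) t (v i t k) /\
      has_deriv_nonneg (fun s => v i s k) t
         (cs_accel kappa0 kappa1 kappa2 psi dinf (fun j => x j t) (fun j => v j t) i k))
  /\ (forall t, 0 <= t -> forall i j : 'I_N, i != j -> x i t != x j t).

Definition cs_energy (kappa2 : R) (dinf : 'I_N -> 'I_N -> R)
  (x v : 'I_N -> 'I_d -> R) : R :=
  2^-1 * \sum_(i < N) enorm (v i) ^+ 2
  + kappa2 / (4 * N%:R) * \sum_(i < N) \sum_(j < N)
        (enorm (vdiff (x j) (x i)) - dinf i j) ^+ 2.

(* "r <= U" where U = max_{i<>j} dinf i j + sqrt(2 N E0 / kappa2);
   written as: r is below dinf i j + sqrt(...) for some pair i <> j *)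
Definition le_U (kappa2 E0 : R) (dinf : 'I_N -> 'I_N -> R) (r : R) : Prop :=
  exists i j : 'I_N, i != j /\
    r <= dinf i j + Num.sqrt (2 * N%:R * E0 / kappa2).

End CSDefs.

(* The energy E is nonincreasing along solutions: symmetrising the power
   sum_i <v_i, a_i> over pairs (i, j), the bond force cancels against the
   derivative of the bond energy and
     dE/dt = -1/(2N) sum_(i,j) (kappa0 psi(|x_j - x_i|) |v_j - v_i|^2
                                + kappa1 <v_j - v_i, e_ij>^2) <= 0.
   Hence the velocities and the bond forces kappa2 (|x_j - x_i| - d_ij) stay
   bounded in terms of E(0); with psi <= psi_M and |e_ij| <= 1 the
   accelerations are uniformly bounded, and so is
   d/dt |v_i - v_j|^2 = 2 <v_i - v_j, a_i - a_j>.  A bounded one-sided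
   derivative on [0, oo) makes the function Lipschitz, hence uniformly
   continuous. *)

From HB Require Import structures.
From mathcomp Require Import all_boot all_order all_algebra.
From mathcomp Require Import all_classical all_reals all_analysis.
From mathcomp Require Import lra ring.
Import Order.TTheory GRing.Theory Num.Theory.
Import numFieldNormedType.Exports.
Local Open Scope classical_set_scope.
Local Open Scope ring_scope.

Set Implicit Arguments. Unset Strict Implicit.

Section OneSidedDerivative.
Variable R : realType.
Implicit Types (f g : R -> R) (t a b c l M : R).

Local Notation at0 t := (within (fun h : R => 0 <= t + h) (0 : R)^').

Lemma eq_has_deriv_nonneg f g t l :
  f =1 g -> has_deriv_nonneg f t l -> has_deriv_nonneg g t l.
Proof. by move=> /funext ->. Qed.

Lemma has_deriv_nonneg_cvg f t l :
  has_deriv_nonneg f t l -> (fun h => f (t + h)) @ at0 t --> f t.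
Proof.
move=> df; have h_to0 : (fun h : R => h) @ at0 t --> (0 : R).
  apply: cvg_trans (cvg_within _) _.
  apply: cvg_trans (cvg_within _) _.
  exact: cvg_id.
have lim : (fun h => f t + h * (h^-1 * (f (t + h) - f t))) @ at0 t --> f t + 0 * l.
  exact: cvgD (cvg_cst _) (cvgM h_to0 df).
rewrite mul0r addr0 in lim; apply: cvg_trans _ lim.
apply: near_eq_cvg; rewrite !near_withinE.
by apply: nearW => h /= hn0 _; rewrite mulrA mulfV // mul1r addrC subrK.
Qed.

Lemma has_deriv_nonneg_cst c t : has_deriv_nonneg (fun=> c) t 0.
Proof.
rewrite /has_deriv_nonneg; have -> : (fun h : R => h^-1 * (c - c)) = fun=> 0.
  by apply/funext => h; rewrite subrr mulr0.
exact: cvg_cst.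
Qed.

Lemma has_deriv_nonneg_id t : has_deriv_nonneg id t 1.
Proof.
have lim : (fun=> 1) @ at0 t --> (1 : R) by exact: cvg_cst.
apply: cvg_trans _ lim; apply: near_eq_cvg; rewrite !near_withinE.
by apply: nearW => h /= hn0 _; rewrite addrC addKr mulVf.
Qed.

Lemma has_deriv_nonnegD f g t a b :
  has_deriv_nonneg f t a -> has_deriv_nonneg g t b ->
  has_deriv_nonneg (fun s => f s + g s) t (a + b).
Proof.
move=> df dg; apply: cvg_trans _ (cvgD df dg); apply: near_eq_cvg.
by apply: nearW => h /=; rewrite -mulrDr opprD addrACA.
Qed.

Lemma has_deriv_nonnegMl c f t a :
  has_deriv_nonneg f t a -> has_deriv_nonneg (fun s => c * f s) t (c * a).
Proof.
move=> df; apply: cvg_trans _ (cvgM (cvg_cst c) df); apply: near_eq_cvg.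
by apply: nearW => h /=; rewrite -mulrBr mulrCA.
Qed.

Lemma has_deriv_nonnegB f g t a b :
  has_deriv_nonneg f t a -> has_deriv_nonneg g t b ->
  has_deriv_nonneg (fun s => f s - g s) t (a - b).
Proof.
move=> df /(has_deriv_nonnegMl (c := -1)) dg; rewrite -mulN1r.
by apply: eq_has_deriv_nonneg (has_deriv_nonnegD df dg) => s; rewrite mulN1r.
Qed.

Lemma has_deriv_nonnegM f g t a b :
  has_deriv_nonneg f t a -> has_deriv_nonneg g t b ->
  has_deriv_nonneg (fun s => f s * g s) t (f t * b + a * g t).
Proof.
move=> df dg.
have lim : (fun h => f (t + h) * (h^-1 * (g (t + h) - g t))
                    + h^-1 * (f (t + h) - f t) * g t) @ at0 t --> f t * b + a * g t.
  exact: cvgD (cvgM (has_deriv_nonneg_cvg df) dg) (cvgM df (cvg_cst _)).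
apply: cvg_trans _ lim; apply: near_eq_cvg; apply: nearW => h /=.
by rewrite mulrCA -mulrA -mulrDr mulrBr mulrBl addrA subrK.
Qed.

Lemma has_deriv_nonneg_sqr f t a :
  has_deriv_nonneg f t a -> has_deriv_nonneg (fun s => f s ^+ 2) t (2 * (f t * a)).
Proof.
move=> df; have := has_deriv_nonnegM df df; rewrite [a * _]mulrC -mulr2n mulr_natl.
by apply: eq_has_deriv_nonneg => s; rewrite expr2.
Qed.

Lemma has_deriv_nonneg_sum (I : Type) (r : seq I) (P : pred I)
    (F : I -> R -> R) (dF : I -> R) t :
  (forall i, P i -> has_deriv_nonneg (F i) t (dF i)) ->
  has_deriv_nonneg (fun s => \sum_(i <- r | P i) F i s) t (\sum_(i <- r | P i) dF i).
Proof.
move=> dFi; elim: r => [|i r IHr].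
  by rewrite big_nil; apply: eq_has_deriv_nonneg (has_deriv_nonneg_cst 0 t) => s;
    rewrite big_nil.
rewrite big_cons; case: ifP => Pi.
  by apply: eq_has_deriv_nonneg (has_deriv_nonnegD (dFi _ Pi) IHr) => s;
    rewrite big_cons Pi.
by apply: eq_has_deriv_nonneg IHr => s; rewrite big_cons Pi.
Qed.

Lemma has_deriv_nonneg_sqrt f t a : (forall s, 0 <= f s) -> 0 < f t ->
  has_deriv_nonneg f t a ->
  has_deriv_nonneg (fun s => Num.sqrt (f s)) t (a / (2 * Num.sqrt (f t))).
Proof.
move=> f_ge0 ft_gt0 df; rewrite mulr_natl mulr2n.
have sqrt_ft_gt0 : 0 < Num.sqrt (f t) by rewrite sqrtr_gt0.
have cvg_den : (fun h => Num.sqrt (f (t + h)) + Num.sqrt (f t)) @ at0 t -->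
    Num.sqrt (f t) + Num.sqrt (f t).
  apply: cvgD (cvg_cst _).
  exact: continuous_cvg (@sqrt_continuous R _) (has_deriv_nonneg_cvg df).
apply: cvg_trans _ (cvgM df (cvgV _ cvg_den)); last by rewrite lt0r_neq0 ?addr_gt0.
apply: near_eq_cvg; apply: nearW => h /=.
have den_gt0 : 0 < Num.sqrt (f (t + h)) + Num.sqrt (f t).
  by rewrite ltr_wpDl ?sqrtr_ge0.
(* [a - b = (sqrt a - sqrt b) (sqrt a + sqrt b)] for [a, b >= 0] *)
rewrite -mulrA; congr (_ * _); apply: (mulIf (lt0r_neq0 den_gt0)).
rewrite divfK ?lt0r_neq0 // mulrBl !mulrDr -!expr2 !sqr_sqrtr //.
by rewrite [Num.sqrt (f t) * _]mulrC opprD addrA addrK.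
Qed.

Lemma has_deriv_nonneg_derive1 f t l : 0 < t -> has_deriv_nonneg f t l ->
  derivable f t 1 /\ derive1 f t = l.
Proof.
move=> t_gt0 df.
have dfE : (fun h => h^-1 *: (f (h + t) - f t)) @ (0 : R)^' --> l.
  apply/cvgrPdist_lt => e e_gt0.
  move/cvgrPdist_lt : df => /(_ e e_gt0); rewrite !near_withinE => near_df.
  have near_t : \forall h \near (0 : R), 0 <= t + h.
    exists t => //= h; rewrite /ball /= sub0r normrN ltr_norml => /andP[h_gt _].
    lra.
  apply: filterS2 near_df near_t => h df_h th hn0.
  by rewrite [h + t]addrC; exact: df_h.
split; last exact: cvg_lim.
apply/cvg_ex; exists l; apply: cvg_trans _ dfE; apply: near_eq_cvg.
by apply: nearW => h /=; rewrite [h%:A]mulr1.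
Qed.

Lemma nonincreasing_has_deriv_nonneg f :
  (forall t, 0 <= t -> exists l, has_deriv_nonneg f t l /\ l <= 0) ->
  forall s t, 0 <= s -> s <= t -> f t <= f s.
Proof.
move=> df s t s_ge0 st.
have df_int x : 0 < x -> exists l, (derivable f x 1 /\ derive1 f x = l) /\ l <= 0.
  move=> x_gt0; have [l [dfx l_le0]] := df x (ltW x_gt0).
  by exists l; split => //; exact: has_deriv_nonneg_derive1.
apply: (@ler0_derive1_nincry R f 0) => //.
- by move=> x; rewrite in_itv /= andbT => /df_int [l [[]]].
- by move=> x; rewrite in_itv /= andbT => /df_int [l [[_ ->]]].
apply/continuous_within_itvcyP; split.
  move=> x; rewrite in_itv /= andbT => /df_int [l [[dfx _] _]].
  exact/differentiable_continuous/derivable1_diffP.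
have [l [df0 _]] := df 0 (lexx 0).
apply/cvgrPdist_lt => e e_gt0.
move/cvgrPdist_lt : (has_deriv_nonneg_cvg df0) => /(_ e e_gt0).
rewrite !near_withinE; apply: filterS => h near_h h_gt0.
by move: (near_h (lt0r_neq0 h_gt0)); rewrite add0r; apply; exact: ltW.
Qed.

(* Both [f - M id] and [- f - M id] are nonincreasing. *)
Lemma lipschitz_has_deriv_nonneg f M :
  (forall t, 0 <= t -> exists l, has_deriv_nonneg f t l /\ `|l| <= M) ->
  forall s t, 0 <= s -> 0 <= t -> `|f s - f t| <= M * `|s - t|.
Proof.
move=> df.
have nonincr (e : R) : `|e| = 1 -> forall s t, 0 <= s -> s <= t ->
    e * f t - M * t <= e * f s - M * s.
  move=> e_norm; apply: (nonincreasing_has_deriv_nonneg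
    (f := fun u => e * f u - M * u)) => u u_ge0.
  have [l [dfu l_le]] := df u u_ge0.
  exists (e * l - M * 1); split.
    exact: has_deriv_nonnegB (has_deriv_nonnegMl (c := e) dfu)
                             (has_deriv_nonnegMl (c := M) (has_deriv_nonneg_id u)).
  rewrite mulr1 subr_le0; apply: le_trans l_le.
  by rewrite (le_trans (ler_norm _)) // normrM e_norm mul1r.
have key s t : 0 <= s -> s <= t -> `|f s - f t| <= M * `|s - t|.
  move=> s_ge0 st; have := nonincr 1 (normr1 _) s t s_ge0 st.
  have := nonincr (-1) (normrN1 _) s t s_ge0 st.
  rewrite distrC [`|s - t|]distrC [`|t - s|]ger0_norm ?subr_ge0 // ler_norml.
  lra.
move=> s t s_ge0 t_ge0; case: (leP s t) => [|/ltW] st; first exact: key.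
by rewrite distrC [`|s - t|]distrC key.
Qed.

Lemma uniform_continuous_has_deriv_nonneg f M :
  (forall t, 0 <= t -> exists l, has_deriv_nonneg f t l /\ `|l| <= M) ->
  forall e, 0 < e -> exists delta, 0 < delta /\
    forall s t, 0 <= s -> 0 <= t -> `|s - t| < delta -> `|f s - f t| < e.
Proof.
move=> df e e_gt0.
have M_ge0 : 0 <= M by have [l [_ /(le_trans (normr_ge0 l))]] := df 0 (lexx 0).
exists (e / (M + 1)); split => [|s t s_ge0 t_ge0 st]; first by rewrite divr_gt0 ?ltr_wpDl.
apply: le_lt_trans (lipschitz_has_deriv_nonneg df s_ge0 t_ge0) _.
apply: le_lt_trans (_ : M * `|s - t| <= M * (e / (M + 1))) _.
  by rewrite ler_wpM2l // ltW.
by rewrite mulrA ltr_pdivrMr ?ltr_wpDl //; lra.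
Qed.

End OneSidedDerivative.

Lemma ler_term_sum (R : numDomainType) n (F : 'I_n -> R) i :
  (forall j, 0 <= F j) -> F i <= \sum_(j < n) F j.
Proof. by move=> F_ge0; rewrite (bigD1 i) //= lerDl sumr_ge0. Qed.

Lemma norm_sum_le (R : numDomainType) n (P : pred 'I_n) (F : 'I_n -> R) B :
  0 <= B -> (forall i, P i -> `|F i| <= B) -> `|\sum_(i < n | P i) F i| <= n%:R * B.
Proof.
move=> B_ge0 F_le; apply: le_trans (ler_norm_sum _ _ _) _.
apply: (@le_trans _ _ (\sum_(i < n) B)); last by rewrite sumr_const card_ord mulr_natl.
by rewrite big_mkcond /=; apply: ler_sum => i _; case: ifP => // /F_le.
Qed.

Lemma sum_pairwise_le0 (R : numDomainType) (I : finType) (G : I -> I -> R) :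
  (forall i j, G i j + G j i <= 0) -> \sum_i \sum_j G i j <= 0.
Proof.
move=> G_le0; rewrite -(pmulrn_lle0 _ (isT : 0 < 2)%N) mulr2n.
rewrite [X in _ + X]exchange_big -big_split sumr_le0 // => i _.
by rewrite -big_split sumr_le0 // => j _; exact: G_le0.
Qed.

Lemma norm_mulr_div_le (R : numFieldType) n (c S Y : R) : (0 < n)%N -> 0 <= c ->
  `|S| <= n%:R * Y -> `|c / n%:R * S| <= c * Y.
Proof.
move=> n_gt0 c_ge0 S_le; have n_gt0' : 0 < n%:R :> R by rewrite ltr0n.
rewrite normrM ger0_norm ?divr_ge0 // mulrAC -mulrA ler_wpM2l //.
by rewrite ler_pdivrMr // mulrC.
Qed.

Lemma normr_le_1Dsqr (R : realDomainType) (y : R) : `|y| <= 1 + y ^+ 2.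
Proof.
rewrite -real_normK ?num_real //.
have := sqr_ge0 (`|y| - 2^-1); rewrite sqrrB; have := normr_ge0 y; nra.
Qed.

Section EuclideanVectors.
Variables (R : realType) (d : nat).
Implicit Types (u w a b : 'I_d -> R).

Lemma vdotC u w : vdot u w = vdot w u.
Proof. by apply: eq_bigr => k _; rewrite mulrC. Qed.

Lemma vdotBl a b w : vdot (vdiff a b) w = vdot a w - vdot b w.
Proof. by rewrite /vdot -sumrB; apply: eq_bigr => k _; rewrite mulrBl. Qed.

Lemma vdotBr u a b : vdot u (vdiff a b) = vdot u a - vdot u b.
Proof. by rewrite /vdot -sumrB; apply: eq_bigr => k _; rewrite mulrBr. Qed.

Lemma vdotNr u w : vdot u (fun k => - w k) = - vdot u w.
Proof. by rewrite /vdot -sumrN; apply: eq_bigr => k _; rewrite mulrN. Qed.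

Lemma vdotMr u w c : vdot u (fun k => c * w k) = c * vdot u w.
Proof. by rewrite /vdot mulr_sumr; apply: eq_bigr => k _; rewrite mulrCA. Qed.

Lemma vdot_divr u w c : vdot u (fun k => w k / c) = vdot u w / c.
Proof. by rewrite /vdot mulr_suml; apply: eq_bigr => k _; rewrite mulrA. Qed.

Lemma vdot_ge0 u : 0 <= vdot u u.
Proof. by apply: sumr_ge0 => k _; rewrite -expr2 sqr_ge0. Qed.

Lemma enorm_sqr u : enorm u ^+ 2 = vdot u u.
Proof. exact/sqr_sqrtr/vdot_ge0. Qed.

Lemma enorm_ge0 u : 0 <= enorm u.
Proof. exact: sqrtr_ge0. Qed.

Lemma enorm_vdiffC a b : enorm (vdiff a b) = enorm (vdiff b a).
Proof.
rewrite /enorm /vdot; congr Num.sqrt; apply: eq_bigr => k _.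
by rewrite /vdiff -opprB mulrNN.
Qed.

Lemma enorm_vdiffxx a : enorm (vdiff a a) = 0.
Proof. by rewrite /enorm /vdot big1 ?sqrtr0 // => k _; rewrite /vdiff subrr mul0r. Qed.

Lemma sqr_coord_le_vdot u k : u k ^+ 2 <= vdot u u.
Proof. by rewrite expr2 ler_term_sum // => l; rewrite -expr2 sqr_ge0. Qed.

Lemma norm_coord_le_enorm u k : `|u k| <= enorm u.
Proof. by rewrite -sqrtr_sqr ler_wsqrtr // sqr_coord_le_vdot. Qed.

Lemma enorm_vdiff_gt0 a b : a != b -> 0 < enorm (vdiff a b).
Proof.
move=> neq_ab; have [k neq_k] : exists k, a k != b k.
  apply: contrapT => no_k; move/eqP: neq_ab; apply; apply/funext => k.
  by apply/eqP/negPn/negP => ?; apply: no_k; exists k.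
apply: lt_le_trans (norm_coord_le_enorm _ k).
by rewrite normr_gt0 subr_eq0.
Qed.

Lemma norm_vdot_le u w Bu Bw : 0 <= Bu -> 0 <= Bw ->
  (forall k, `|u k| <= Bu) -> (forall k, `|w k| <= Bw) ->
  `|vdot u w| <= d%:R * (Bu * Bw).
Proof.
move=> Bu_ge0 Bw_ge0 u_le w_le; apply: norm_sum_le; first exact: mulr_ge0.
by move=> k _; rewrite normrM ler_pM.
Qed.

Lemma has_deriv_nonneg_vdot (u w : R -> 'I_d -> R) (du dw : 'I_d -> R) t :
  (forall k, has_deriv_nonneg (u^~ k) t (du k)) ->
  (forall k, has_deriv_nonneg (w^~ k) t (dw k)) ->
  has_deriv_nonneg (fun s => vdot (u s) (w s)) t (vdot (u t) dw + vdot du (w t)).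
Proof.
move=> du_k dw_k; rewrite /vdot -big_split.
exact: (has_deriv_nonneg_sum (r := index_enum 'I_d) (P := xpredT)
  (fun k _ => has_deriv_nonnegM (du_k k) (dw_k k))).
Qed.

Lemma has_deriv_nonneg_enorm_sqr (u : R -> 'I_d -> R) (du : 'I_d -> R) t :
  (forall k, has_deriv_nonneg (u^~ k) t (du k)) ->
  has_deriv_nonneg (fun s => enorm (u s) ^+ 2) t (2 * vdot (u t) du).
Proof.
move=> du_k; have := has_deriv_nonneg_vdot du_k du_k.
rewrite [vdot du _]vdotC -mulr2n mulr_natl.
by apply: eq_has_deriv_nonneg => s; rewrite enorm_sqr.
Qed.

Lemma has_deriv_nonneg_enorm (u : R -> 'I_d -> R) (du : 'I_d -> R) t :
  (forall k, has_deriv_nonneg (u^~ k) t (du k)) -> 0 < enorm (u t) ->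
  has_deriv_nonneg (fun s => enorm (u s)) t (vdot (u t) du / enorm (u t)).
Proof.
move=> du_k u_gt0.
have := has_deriv_nonneg_sqrt (fun s => sqr_ge0 (enorm (u s))) _
  (has_deriv_nonneg_enorm_sqr du_k).
rewrite exprn_gt0 // sqrtr_sqr ger0_norm ?enorm_ge0 // -mulf_div divff // mul1r.
by move/(_ isT); apply: eq_has_deriv_nonneg => s; rewrite sqrtr_sqr ger0_norm ?enorm_ge0.
Qed.

End EuclideanVectors.

Section Configuration.
Variables (R : realType) (N d : nat) (k0 k1 k2 : R) (psi : R -> R)
  (dinf : 'I_N -> 'I_N -> R) (X V : 'I_N -> 'I_d -> R).

Definition pair_dist i j := enorm (vdiff (X j) (X i)).
(* [pair_dir i i = 0] because [0 / 0 = 0]; this is what lets the [j != i] sums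
   of [cs_accel] be taken over all [j]. *)
Definition pair_dir i j : 'I_d -> R := fun k => vdiff (X j) (X i) k / pair_dist i j.
Definition bond_stretch i j := pair_dist i j - dinf i j.
Definition radial_speed i j := vdot (vdiff (V j) (V i)) (pair_dir i j).
Definition cs_accel_vec i : 'I_d -> R := cs_accel k0 k1 k2 psi dinf X V i.

Lemma norm_pair_dir_le1 i j k : `|pair_dir i j k| <= 1.
Proof.
rewrite /pair_dir /pair_dist normrM normfV (ger0_norm (enorm_ge0 _)).
have [->|dist_neq0] := eqVneq (enorm (vdiff (X j) (X i))) 0.
  by rewrite invr0 mulr0.
rewrite ler_pdivrMr ?mul1r ?norm_coord_le_enorm //.
by rewrite lt_neqAle eq_sym dist_neq0 enorm_ge0.
Qed.

Lemma pair_distC i j : pair_dist j i = pair_dist i j.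
Proof. exact: enorm_vdiffC. Qed.

Lemma pair_dirC i j : pair_dir j i = (fun k => - pair_dir i j k).
Proof. by apply/funext => k; rewrite /pair_dir pair_distC /vdiff -opprB mulNr. Qed.

Lemma pair_dirxx i : pair_dir i i = (fun=> 0).
Proof. by apply/funext => k; rewrite /pair_dir /vdiff subrr mul0r. Qed.

Lemma radial_speedC i j : radial_speed j i = radial_speed i j.
Proof. by rewrite /radial_speed pair_dirC vdotNr !vdotBl opprB. Qed.

Definition pair_power i j :=
  k0 / N%:R * (psi (pair_dist i j) * vdot (V i) (vdiff (V j) (V i)))
  + k1 / N%:R * (radial_speed i j * vdot (V i) (pair_dir i j))
  + k2 / N%:R * (bond_stretch i j * vdot (V i) (pair_dir i j)).

Lemma vdot_cs_accel i : vdot (V i) (cs_accel_vec i) = \sum_(j < N) pair_power i j.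
Proof.
have pull c (P : pred 'I_N) (F : 'I_N -> 'I_d -> R) :
    \sum_(k < d) V i k * (c * \sum_(j < N | P j) F j k)
    = c * \sum_(j < N | P j) vdot (V i) (F j).
  rewrite /vdot exchange_big /= mulr_sumr; apply: eq_bigr => k _.
  by rewrite mulrCA mulr_sumr.
have drop_diag (F : 'I_N -> R) : F i = 0 -> \sum_(j < N | j != i) F j = \sum_(j < N) F j.
  by move=> Fi0; rewrite [RHS](bigD1 i) //= Fi0 add0r.
rewrite {1}/vdot /cs_accel_vec /cs_accel.
under eq_bigr do rewrite !mulrDr.
rewrite !big_split /= !pull !drop_diag; last 2 first.
- by rewrite /vdot big1 // => k _; rewrite /vdiff subrr mul0r !mulr0.
- by rewrite /vdot big1 // => k _; rewrite /vdiff subrr mul0r !mulr0.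
rewrite -!mulr_sumr; congr (_ * _ + _ * _ + _ * _).
all: by apply: eq_bigr => j _; rewrite vdotMr.
Qed.

Hypothesis dinf_sym : forall i j, dinf i j = dinf j i.

Lemma bond_stretchC i j : bond_stretch j i = bond_stretch i j.
Proof. by rewrite /bond_stretch pair_distC dinf_sym. Qed.

Lemma pair_powerC i j :
  pair_power i j + pair_power j i + k2 / N%:R * (bond_stretch i j * radial_speed i j)
  = - (k0 / N%:R * (psi (pair_dist i j) * vdot (vdiff (V j) (V i)) (vdiff (V j) (V i)))
       + k1 / N%:R * radial_speed i j ^+ 2).
Proof.
rewrite /pair_power pair_distC bond_stretchC radial_speedC pair_dirC !vdotNr.
rewrite /radial_speed !vdotBl !vdotBr [vdot (V j) (V i)]vdotC.
ring.
Qed.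

Hypotheses (k0_ge0 : 0 <= k0) (k1_ge0 : 0 <= k1)
  (psi_ge0 : forall r, 0 <= r -> 0 <= psi r).

Lemma energy_dissipation :
  \sum_(i < N) vdot (V i) (cs_accel_vec i)
  + 2^-1 * (k2 / N%:R * \sum_(i < N) \sum_(j < N) bond_stretch i j * radial_speed i j)
  <= 0.
Proof.
(* Half of the bond-energy power is booked on each of the pairs (i, j), (j, i). *)
set G := fun i j =>
  pair_power i j + 2^-1 * (k2 / N%:R * (bond_stretch i j * radial_speed i j)).
rewrite [Y in Y <= 0](_ : _ = \sum_i \sum_j G i j); last first.
  rewrite !mulr_sumr -big_split /=; apply: eq_bigr => i _.
  by rewrite vdot_cs_accel !mulr_sumr -big_split.
apply: sum_pairwise_le0 => i j; rewrite /G (bond_stretchC i j) (radial_speedC i j).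
have K_ge0 (k : R) : 0 <= k -> 0 <= k / N%:R by move=> ?; rewrite divr_ge0.
have psi_ij : 0 <= psi (pair_dist i j) by apply/psi_ge0/enorm_ge0.
have := mulr_ge0 (K_ge0 _ k0_ge0) (mulr_ge0 psi_ij (vdot_ge0 (vdiff (V j) (V i)))).
have := mulr_ge0 (K_ge0 _ k1_ge0) (sqr_ge0 (radial_speed i j)).
have := pair_powerC i j.
lra.
Qed.

Hypothesis k2_ge0 : 0 <= k2.

Lemma kinetic_le_energy i : 2^-1 * enorm (V i) ^+ 2 <= cs_energy k2 dinf X V.
Proof.
rewrite /cs_energy -[Y in Y <= _]addr0 lerD ?mulr_ge0 ?divr_ge0 ?mulr_ge0 //.
- rewrite ler_wpM2l // (ler_term_sum (F := fun j => enorm (V j) ^+ 2)) // => j.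
  exact: sqr_ge0.
- by apply: sumr_ge0 => j _; apply: sumr_ge0 => l _; exact: sqr_ge0.
Qed.

Lemma stretch_le_energy i j :
  k2 / (4 * N%:R) * bond_stretch i j ^+ 2 <= cs_energy k2 dinf X V.
Proof.
rewrite /cs_energy -[Y in Y <= _]add0r lerD ?mulr_ge0 //.
- by apply: sumr_ge0 => l _; exact: sqr_ge0.
rewrite ler_wpM2l ?divr_ge0 ?mulr_ge0 //.
apply: le_trans (ler_term_sum i _) => [|l]; last by apply: sumr_ge0 => m _; exact: sqr_ge0.
by apply: (ler_term_sum (F := fun m => bond_stretch i m ^+ 2)) => m; exact: sqr_ge0.
Qed.

Variable psiM : R.
Hypotheses (N_gt0 : (0 < N)%N) (psi_le : forall r, 0 <= r -> psi r <= psiM).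

Lemma norm_cs_accel_le i k B P :
  (forall j l, `|V j l| <= B) -> (forall j, k2 * `|bond_stretch i j| <= P) ->
  `|cs_accel_vec i k| <= k0 * (psiM * (B + B)) + k1 * (d%:R * (B + B)) + P.
Proof.
move=> V_le stretch_le.
have B_ge0 : 0 <= B by apply: le_trans (V_le i k).
have P_ge0 : 0 <= P by apply: le_trans (stretch_le i); rewrite mulr_ge0.
have psiM_ge0 : 0 <= psiM by rewrite (le_trans (psi_ge0 (lexx 0))) ?psi_le.
have dV_le j l : `|V j l - V i l| <= B + B.
  by rewrite (le_trans (ler_normB _ _)) ?lerD.
have radial_le j : `|radial_speed i j| <= d%:R * (B + B).
  rewrite -[B + B]mulr1 norm_vdot_le ?addr_ge0 // => l.
    exact: dV_le.
  exact: norm_pair_dir_le1.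
rewrite /cs_accel_vec /cs_accel /= (le_trans (ler_normD _ _)) ?lerD //.
  rewrite (le_trans (ler_normD _ _)) ?lerD //.
  - apply: norm_mulr_div_le => //; apply: norm_sum_le => [|j _].
      by rewrite mulr_ge0 ?addr_ge0.
    rewrite normrM ler_pM ?psi_le ?dV_le ?enorm_ge0 //.
    by rewrite ger0_norm ?psi_le ?psi_ge0 ?enorm_ge0.
  - apply: norm_mulr_div_le => //; apply: norm_sum_le => [|j _].
      by rewrite mulr_ge0 ?addr_ge0.
    by rewrite normrM -[Y in _ <= Y]mulr1 ler_pM ?radial_le ?norm_pair_dir_le1.
(* The hypothesis bounds [k2 * |bond_stretch|], so [k2] is moved inside the sum. *)
rewrite -mulrA mulrCA -div1r -[P]mul1r; apply: norm_mulr_div_le => //; rewrite mulr_sumr.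
apply: norm_sum_le => // j _; rewrite normrM (ger0_norm k2_ge0) normrM mulrA -[P]mulr1.
by apply: ler_pM (stretch_le j) (norm_pair_dir_le1 i j k); rewrite ?mulr_ge0.
Qed.

End Configuration.

Section Solution.
Variables (R : realType) (N d : nat) (k0 k1 k2 psiM : R) (psi : R -> R)
  (dinf : 'I_N -> 'I_N -> R) (x v : 'I_N -> R -> 'I_d -> R).
Hypotheses (N_gt0 : (0 < N)%N) (k0_ge0 : 0 <= k0) (k1_ge0 : 0 <= k1) (k2_ge0 : 0 <= k2)
  (dinf_sym : forall i j, dinf i j = dinf j i)
  (psi_range : forall r, 0 <= r -> 0 <= psi r <= psiM)
  (sol : cs_global_solution k0 k1 k2 psi dinf x v).

Local Notation X t := (fun j => x j t).
Local Notation V t := (fun j => v j t).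
Local Notation accel t := (cs_accel_vec k0 k1 k2 psi dinf (X t) (V t)).
Local Notation energy t := (cs_energy k2 dinf (X t) (V t)).
Local Notation bond_power t i j :=
  (bond_stretch dinf (X t) i j * radial_speed (X t) (V t) i j).

Let psi_ge0 r : 0 <= r -> 0 <= psi r.
Proof. by move=> /psi_range /andP[]. Qed.

Let psi_le r : 0 <= r -> psi r <= psiM.
Proof. by move=> /psi_range /andP[]. Qed.

Let deriv_x t i k : 0 <= t -> has_deriv_nonneg (x i ^~ k) t (v i t k).
Proof. by move=> t_ge0; case: (sol.1 t t_ge0 i k). Qed.

Let deriv_v t i k : 0 <= t -> has_deriv_nonneg (v i ^~ k) t (accel t i k).
Proof. by move=> t_ge0; case: (sol.1 t t_ge0 i k). Qed.

Lemma has_deriv_nonneg_pair_dist t i j : 0 <= t ->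
  has_deriv_nonneg (fun s => pair_dist (X s) i j) t (radial_speed (X t) (V t) i j).
Proof.
move=> t_ge0; have [<-|neq_ij] := eqVneq i j.
  rewrite /radial_speed pair_dirxx /vdot big1 => [|k _]; last exact: mulr0.
  apply: eq_has_deriv_nonneg (has_deriv_nonneg_cst 0 t) => s.
  by rewrite /pair_dist enorm_vdiffxx.
have dX k : has_deriv_nonneg (fun s => vdiff (x j s) (x i s) k) t
                             (vdiff (v j t) (v i t) k).
  by apply: has_deriv_nonnegB; exact: deriv_x.
have dist_gt0 : 0 < enorm (vdiff (x j t) (x i t)).
  by apply/enorm_vdiff_gt0/(proj2 sol t t_ge0); rewrite eq_sym.
rewrite /radial_speed /pair_dir vdot_divr vdotC.
exact: has_deriv_nonneg_enorm dX dist_gt0.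
Qed.

Lemma has_deriv_nonneg_energy t : 0 <= t ->
  has_deriv_nonneg (fun s => energy s) t
    (\sum_(i < N) vdot (v i t) (accel t i)
     + 2^-1 * (k2 / N%:R * \sum_(i < N) \sum_(j < N) bond_power t i j)).
Proof.
move=> t_ge0.
have dkin i : has_deriv_nonneg (fun s => enorm (v i s) ^+ 2) t
                               (2 * vdot (v i t) (accel t i)).
  by apply: has_deriv_nonneg_enorm_sqr => k; exact: deriv_v.
have dpot i j : has_deriv_nonneg (fun s => bond_stretch dinf (X s) i j ^+ 2) t
    (2 * bond_power t i j).
  apply/has_deriv_nonneg_sqr; rewrite -[radial_speed _ _ _ _]subr0.
  exact: has_deriv_nonnegB (has_deriv_nonneg_pair_dist (i := i) (j := j) t_ge0)
                           (has_deriv_nonneg_cst (dinf i j) t).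
have := has_deriv_nonnegD
  (has_deriv_nonnegMl (c := 2^-1)
     (has_deriv_nonneg_sum (r := index_enum 'I_N) (P := xpredT) (fun i _ => dkin i)))
  (has_deriv_nonnegMl (c := k2 / (4 * N%:R))
     (has_deriv_nonneg_sum (r := index_enum 'I_N) (P := xpredT)
        (fun i _ => has_deriv_nonneg_sum (r := index_enum 'I_N) (P := xpredT)
           (fun j _ => dpot i j)))).
have sum2 : \sum_i \sum_j 2 * bond_power t i j = 2 * \sum_i \sum_j bond_power t i j.
  by rewrite mulr_sumr; apply: eq_bigr => i _; rewrite mulr_sumr.
rewrite -mulr_sumr sum2.
set pot := \sum_(i < N) _; set kin := \sum_(i < N) _.
have N_neq0 : N%:R != 0 :> R by rewrite pnatr_eq0 -lt0n.
suff -> : kin + 2^-1 * (k2 / N%:R * pot)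
          = 2^-1 * (2 * kin) + k2 / (4 * N%:R) * (2 * pot) by [].
by field.
Qed.

Lemma energy_le_initial t : 0 <= t -> energy t <= energy 0.
Proof.
move=> t_ge0.
apply: (nonincreasing_has_deriv_nonneg (f := fun s => energy s) _ (lexx 0) t_ge0).
move=> s s_ge0.
by eexists; split; [exact: has_deriv_nonneg_energy | exact: energy_dissipation].
Qed.

Let vel_bound := 1 + 2 * energy 0.
Let stretch_bound := k2 + 4 * N%:R * energy 0.
Let accel_bound := k0 * (psiM * (vel_bound + vel_bound))
  + k1 * (d%:R * (vel_bound + vel_bound)) + stretch_bound.

Lemma norm_velocity_le t i k : 0 <= t -> `|v i t k| <= vel_bound.
Proof.
move=> t_ge0; apply: le_trans (normr_le_1Dsqr _) _; rewrite lerD2l.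
apply: le_trans (sqr_coord_le_vdot _ k) _; rewrite -enorm_sqr.
have := kinetic_le_energy dinf (X t) (V t) k2_ge0 i.
have := energy_le_initial t_ge0; lra.
Qed.

Lemma stretch_force_le t i j : 0 <= t ->
  k2 * `|bond_stretch dinf (X t) i j| <= stretch_bound.
Proof.
move=> t_ge0; apply: le_trans (ler_wpM2l k2_ge0 (normr_le_1Dsqr _)) _.
rewrite mulrDr mulr1 lerD2l.
have N4_gt0 : 0 < 4 * N%:R :> R by rewrite mulr_gt0 ?ltr0n.
have stretch_E := stretch_le_energy dinf (X t) (V t) k2_ge0 i j.
rewrite mulrAC ler_pdivrMr // [Y in _ <= Y]mulrC in stretch_E.
by apply: le_trans stretch_E _; rewrite ler_wpM2l ?energy_le_initial // ltW.
Qed.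

Lemma norm_accel_le t i k : 0 <= t -> `|accel t i k| <= accel_bound.
Proof.
move=> t_ge0; apply: norm_cs_accel_le => //.
- by move=> j l; exact: norm_velocity_le.
- by move=> j; exact: stretch_force_le.
Qed.

Lemma deriv_velocity_gap_bounded i j : exists M, forall t, 0 <= t -> exists l,
  has_deriv_nonneg (fun s => enorm (vdiff (v i s) (v j s)) ^+ 2) t l /\ `|l| <= M.
Proof.
exists (2 * (d%:R * ((vel_bound + vel_bound) * (accel_bound + accel_bound)))).
move=> t t_ge0.
have E0_ge0 : 0 <= energy 0.
  apply: le_trans (kinetic_le_energy dinf (X 0) (V 0) k2_ge0 i).
  by rewrite mulr_ge0 ?invr_ge0 ?sqr_ge0.
have psiM_ge0 : 0 <= psiM by rewrite (le_trans (psi_ge0 (lexx 0))) ?psi_le.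
have vel2_ge0 : 0 <= vel_bound + vel_bound by rewrite !addr_ge0 ?mulr_ge0.
have accel2_ge0 : 0 <= accel_bound + accel_bound by
  rewrite /accel_bound /stretch_bound !addr_ge0 ?mulr_ge0.
have du k : has_deriv_nonneg (fun s => vdiff (v i s) (v j s) k) t
                             (vdiff (accel t i) (accel t j) k).
  by apply: has_deriv_nonnegB; exact: deriv_v.
eexists; split; first exact: has_deriv_nonneg_enorm_sqr du.
rewrite normrM ger0_norm // ler_wpM2l //.
apply: norm_vdot_le => // k.
  by rewrite (le_trans (ler_normB _ _)) ?lerD ?norm_velocity_le.
by rewrite (le_trans (ler_normB _ _)) ?lerD ?norm_accel_le.
Qed.

End Solution.

Theorem lemma4p1 (R : realType) (N d : nat) (kappa0 kappa1 kappa2 psiM : R)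
  (psi : R -> R) (dinf : 'I_N -> 'I_N -> R)
  (x v : 'I_N -> R -> 'I_d -> R) :
  (2 <= N)%N -> (1 <= d)%N ->
  0 <= kappa0 -> 0 <= kappa1 -> 0 <= kappa2 ->
  (forall i j, dinf i j = dinf j i) -> (forall i, dinf i i = 0) ->
  (* psi locally Lipschitz on [0, +oo) *)
  (forall b, 0 <= b -> exists L, forall r s, 0 <= r <= b -> 0 <= s <= b ->
        `|psi r - psi s| <= L * `|r - s|) ->
  (forall r, 0 <= r -> 0 <= psi r <= psiM) ->
  (* min_{[0,U]} psi > 0 (U = +oo when kappa2 = 0) *)
  (exists c, 0 < c /\ forall r, 0 <= r ->
      (kappa2 = 0 \/
       le_U kappa2
         (cs_energy kappa2 dinf (fun i => x i 0) (fun i => v i 0)) dinf r) ->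
      c <= psi r) ->
  cs_global_solution kappa0 kappa1 kappa2 psi dinf x v ->
  forall i j : 'I_N,
    (exists M, forall t, 0 <= t -> exists l,
        has_deriv_nonneg (fun s => enorm (vdiff (v i s) (v j s)) ^+ 2) t l
        /\ `|l| <= M)
    /\
    (forall eps, 0 < eps -> exists delta, 0 < delta /\
        forall s t, 0 <= s -> 0 <= t -> `|s - t| < delta ->
          `|enorm (vdiff (v i s) (v j s)) ^+ 2 - enorm (vdiff (v i t) (v j t)) ^+ 2|
            < eps).
Proof.
move=> N_ge2 _ k0_ge0 k1_ge0 k2_ge0 dinf_sym _ _ psi_range _ sol i j.
have [M dM] := deriv_velocity_gap_bounded (ltnW N_ge2) k0_ge0 k1_ge0 k2_ge0
  dinf_sym psi_range sol i j.
by split; [exists M | exact: uniform_continuous_has_deriv_nonneg dM].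
Qed.
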